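(* Let $T>0$, $N\ge1$, $p>1$, and let $F:[0,T]\times\mathbb{R}^N\to\mathbb{R}$ and $\delta>0$ be such that for a.e. $t$, $x\mapsto F(t,x)$ is continuously differentiable on $\{|x|\le\delta\}$. Assume: (H1) there exist constants $q_1>p^2$, $q_2\in(p^2,q_1)$, $M_1>0$, $M_2>0$ with $M_1|x|^{q_1}\le F(t,x)\le M_2|x|^{q_2}$ for all $|x|\le\delta$ and a.e. $t\in[0,T]$; (H2) there is $\beta>p^2$ with $0\le\beta F(t,x)\le(\nabla F(t,x),x)$ for all $|x|\le\delta$ and a.e. $t\in[0,T]$. Let $m\in C^1(\mathbb{R},[0,1])$ be even with $sm'(s)\le0$ for all $s$, $m(s)=1$ for $|s|\le\delta/2$ and $m(s)=0$ for $|s|\ge\delta$, and define $\bar F(t,x)=m(|x|)F(t,x)+(1-m(|x|))M_2|x|^{q_2}$. Let $\theta=\min\{q_2,\beta\}$. Then, for a.e. $t\in[0,T]$: (i) $0\le\bar F(t,x)\le M_2|x|^{q_2}$ for all $x\in\mathbb{R}^N$; (ii) $0<\theta\bar F(t,x)\le(\nabla\bar F(t,x),x)$ for all $x\in\mathbb{R}^N\setminus\{0\}$.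
   Context: $\nabla$ denotes the gradient in $x\in\mathbb{R}^N$ and $(\cdot,\cdot)$ the Euclidean inner product. *)

From HB Require Import structures.
From mathcomp Require Import all_boot all_order all_algebra.
From mathcomp Require Import all_classical all_reals all_analysis.
Set Implicit Arguments. Unset Strict Implicit. Unset Printing Implicit Defensive.
Import Order.TTheory GRing.Theory Num.Theory.
Import numFieldNormedType.Exports.
Local Open Scope ring_scope.

Definition dotv (R : realType) (N : nat) (u v : 'rV[R]_N) : R :=
  \sum_(i < N) u ord0 i * v ord0 i.

Definition enorm (R : realType) (N : nat) (x : 'rV[R]_N) : R :=
  Num.sqrt (dotv x x).

Definition evec (R : realType) (N : nat) (i : 'I_N) : 'rV[R]_N :=
  delta_mx ord0 i.

Definition grad (R : realType) (N : nat) (f : 'rV[R]_N -> R) (x : 'rV[R]_N)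
  : 'rV[R]_N := \row_(i < N) 'D_(evec R i) f x.

Definition Fbar (R : realType) (N : nat) (m : R -> R) (M2 q2 : R)
  (F : R -> 'rV[R]_N -> R) (t : R) (x : 'rV[R]_N) : R :=
  m (enorm x) * F t x + (1 - m (enorm x)) * (M2 * (enorm x `^ q2)).

From HB Require Import structures.
From mathcomp Require Import all_boot all_order all_algebra.
From mathcomp Require Import all_classical all_reals all_analysis.
From mathcomp Require Import ring lra.
Set Implicit Arguments. Unset Strict Implicit. Unset Printing Implicit Defensive.
Import Order.TTheory GRing.Theory Num.Theory.
Import numFieldNormedType.Exports.
Local Open Scope classical_set_scope.
Local Open Scope ring_scope.

(* Put P(x) = M2 |x|^q2, so that Fbar = m(|x|) F + (1 - m(|x|)) P.  Where m(|x|) > 0 we have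
   |x| <= delta, and there (H1) gives 0 < F <= P; hence Fbar is a convex combination of two
   values in (0, P], which yields (i) and the positivity in (ii).  The Euler derivative
   (grad Fbar(x), x) is the derivative of s |-> Fbar((1 + s) x) at s = 0, namely
     |x| m'(|x|) (F - P) + m (grad F, x) + (1 - m) q2 P.
   The first term is nonnegative since s m'(s) <= 0 and F <= P, and the other two dominate
   theta m F and theta (1 - m) P by (H2) and theta <= q2.  Outside the ball of radius delta,
   Fbar coincides with P near x and its Euler derivative is q2 P. *)

Section DirectionalDerivative.
Variables (R : numFieldType) (V W : normedModType R).

Lemma derive_along_ray (f : V -> W) a v :
  'D_v f a = 'D_1 (fun s : R => f (s *: v + a)) 0.
Proof.
rewrite /derive /= scale0r add0r.
suff -> : (fun h : R => h^-1 *: (f ((h *: 1 + 0) *: v + a) - f a)) =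
  (fun h => h^-1 *: (f (h *: v + a) - f a)) by [].
by apply: funext => h; rewrite addr0 [h *: 1]mulr1.
Qed.

Lemma near_eq_differentiable (f g : V -> W) x :
  {near x, f =1 g} -> differentiable f x -> differentiable g x.
Proof.
move=> fg df.
have fgx : f x = g x by apply: (nbhs_singleton fg).
have dg : g \o shift x = cst (g x) + 'd f x +o_ 0 id.
  apply/eqaddoP => eps eps0.
  have := diff_locally df => /eqaddoP/(_ eps eps0).
  have : \forall y \near 0, f (y + x) = g (y + x).
    by move: fg; rewrite (near_shift 0 x); apply: filterS => y /=; rewrite subr0.
  by apply: filterS2 => y /= fgy; rewrite !fctE /= fgx fgy.
apply/diff_locallyP; rewrite (diff_unique (diff_continuous df) dg).
by split; [exact: diff_continuous | exact: dg].
Qed.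

End DirectionalDerivative.

Lemma derive1_comp_affine (R : realFieldType) (g : R -> R) (c : R) :
  derivable g c 1 -> derive1 (fun s => g (s * c + c)) 0 = c * derive1 g c.
Proof.
(* [Da] comes before [da]: with a [derivable] hypothesis in context, [//] gets very slow. *)
have Da : derive1 (fun s : R => s * c + c) 0 = c.
  by rewrite derive1E deriveD // ?deriveMr // derive_id derive_cst addr0 mulr1.
have da : derivable (fun s : R => s * c + c) 0 1.
  by apply: derivableD => //; apply: derivableM.
move=> dg; have dg0 : derivable g ((fun s => s * c + c) 0) 1 by rewrite /= mul0r add0r.
by rewrite (derive1_comp da dg0) Da /= mul0r add0r mulrC.
Qed.

Section EuclideanNorm.
Variables (R : realType) (N : nat).
Implicit Types (x : 'rV[R]_N) (f : 'rV[R]_N -> R).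

Lemma dotv_ge0 x : 0 <= dotv x x.
Proof. by apply: sumr_ge0 => i _; rewrite -expr2 sqr_ge0. Qed.

Lemma dotv_gt0 x : x != 0 -> 0 < dotv x x.
Proof.
apply: contraNT; rewrite -leNgt => dx0; apply/eqP; apply/matrixP => i j.
have sq_ge0 (k : 'I_N) : true -> 0 <= x ord0 k * x ord0 k.
  by move=> _; rewrite -expr2 sqr_ge0.
have dx : dotv x x = 0 by apply/eqP; rewrite eq_le dx0 dotv_ge0.
have /eqP := psumr_eq0P sq_ge0 dx (i := j) isT.
by rewrite mulf_eq0 orbb mxE [i]ord1 => /eqP.
Qed.

Lemma enorm_gt0 x : x != 0 -> 0 < enorm x.
Proof. by move=> x0; rewrite sqrtr_gt0 dotv_gt0. Qed.

Lemma enorm_ray x (s : R) : enorm (s *: x + x) = `|s + 1| * enorm x.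
Proof.
rewrite -[X in _ + X]scale1r -scalerDl /enorm /dotv.
under eq_bigr => i _ do rewrite !mxE mulrACA.
by rewrite -mulr_sumr sqrtrM ?sqr_ge0 // -expr2 sqrtr_sqr.
Qed.

Lemma dotv_grad f x : differentiable f x -> dotv (grad f x) x = 'D_x f x.
Proof.
move=> df; rewrite /dotv deriveE // [X in 'd f x X]row_sum_delta linear_sum.
by apply: eq_bigr => i _; rewrite mxE deriveE // linearZ mulrC.
Qed.

Lemma dotv_differentiable x : differentiable (fun y => dotv y y) x.
Proof.
have -> : (fun y => dotv y y) = \sum_(i < N) (fun y : 'rV[R]_N => y ord0 i * y ord0 i).
  by rewrite fct_sumE.
by apply: differentiable_sum => i; apply: differentiableM; exact: differentiable_coord.
Qed.

Lemma enorm_continuous : continuous (@enorm R N).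
Proof.
move=> x; apply: continuous_comp; last exact: sqrt_continuous.
exact/differentiable_continuous/dotv_differentiable.
Qed.

Lemma enorm_differentiable x : x != 0 -> differentiable (@enorm R N) x.
Proof.
move=> x0; apply: (differentiable_comp (dotv_differentiable x)).
by apply/derivable1_diffP/ex_derive; apply: is_derive1_sqrt; rewrite dotv_gt0.
Qed.

Lemma differentiable_radial (g : R -> R) x :
  x != 0 -> derivable g (enorm x) 1 -> differentiable (g \o @enorm R N) x.
Proof.
by move=> x0 /derivable1_diffP dg; apply: differentiable_comp => //; exact: enorm_differentiable.
Qed.

Lemma derive_radial (g : R -> R) x : x != 0 -> derivable g (enorm x) 1 ->
  'D_x (g \o @enorm R N) x = enorm x * derive1 g (enorm x).
Proof.
move=> x0 dg.
have ray : \forall s \near 0, g (enorm (s *: x + x)) = g (s * enorm x + enorm x).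
  near=> s; rewrite enorm_ray ger0_norm ?mulrDl ?mul1r //.
  near: s; apply: filterS (nbhs0_lt (V := R^o) ltr01) => s.
  by rewrite ltr_norml => /andP[s1 _]; lra.
by rewrite derive_along_ray (near_eq_derive _ ray) -derive1E derive1_comp_affine.
Unshelve. all: by end_near.
Qed.

Lemma differentiable_radial_powR (M q : R) x :
  x != 0 -> differentiable (fun y => M * enorm y `^ q) x.
Proof.
move=> x0; apply: (differentiable_radial (g := fun r => M * r `^ q)) => //.
by apply: derivableM => //; apply: derivable_powR; rewrite in_itv /= andbT enorm_gt0.
Qed.

Lemma derive_radial_powR (M q : R) x :
  x != 0 -> 'D_x (fun y => M * enorm y `^ q) x = q * (M * enorm x `^ q).
Proof.
move=> x0; have c0 := enorm_gt0 x0.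
have c_pos : enorm x \in `]0, +oo[ by rewrite in_itv /= andbT.
rewrite (derive_radial (g := fun r => M * r `^ q)) //; last first.
  by apply: derivableM => //; exact: derivable_powR.
rewrite derive1E deriveMl; last exact: derivable_powR.
rewrite -derive1E powR_derive1 //.
have -> : enorm x `^ q = enorm x `^ (q - 1) * enorm x `^ 1.
  by rewrite -powRD ?subrK //; apply/implyP => _; rewrite gt_eqF.
by rewrite powRr1 ?(ltW c0) //; ring.
Qed.

End EuclideanNorm.

Lemma cutoff_euler_ineq (R : realFieldType) (mu dm f P D q beta theta : R) :
  0 <= mu <= 1 -> dm <= 0 -> 0 <= f <= P -> beta * f <= D ->
  theta <= beta -> theta <= q ->
  theta * (mu * f + (1 - mu) * P) <= dm * (f - P) + mu * D + (1 - mu) * (q * P).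
Proof.
move=> /andP[mu0 mu1] dm0 /andP[f0 fP] fD tb tq.
have : theta * f <= beta * f by rewrite ler_wpM2r.
have : theta * P <= q * P by rewrite ler_wpM2r // (le_trans f0).
nra.
Qed.

Section CutoffNonlinearity.
Variables (R : realType) (N : nat) (F : R -> 'rV[R]_N -> R) (t : R) (m : R -> R).
Variables (delta M1 M2 q1 q2 beta theta : R).
Hypotheses (M1_gt0 : 0 < M1) (M2_gt0 : 0 < M2).
Hypothesis F_differentiable :
  forall x, enorm x <= delta -> differentiable (F t) x.
Hypothesis F_bounds : forall x, enorm x <= delta ->
  M1 * enorm x `^ q1 <= F t x <= M2 * enorm x `^ q2.
Hypothesis F_euler : forall x, enorm x <= delta ->
  beta * F t x <= dotv (grad (F t) x) x.
Hypothesis m_derivable : forall s, derivable m s 1.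
Hypothesis m_range : forall s, 0 <= m s <= 1.
Hypothesis m_nonincreasing : forall s, s * derive1 m s <= 0.
Hypothesis m_outside : forall s, delta <= s -> m s = 0.
Hypotheses (theta_le_q2 : theta <= q2) (theta_le_beta : theta <= beta).

Implicit Types x : 'rV[R]_N.

Local Notation P x := (M2 * enorm x `^ q2).
Local Notation Fb := (Fbar m M2 q2 F t).

Let P_gt0 x : x != 0 -> 0 < P x.
Proof. by move=> x0; rewrite mulr_gt0 // powR_gt0 // enorm_gt0. Qed.

Let F_ge0 x : enorm x <= delta -> 0 <= F t x.
Proof.
move=> xd; have /andP[lo _] := F_bounds xd.
by apply: le_trans lo; rewrite mulr_ge0 ?powR_ge0 // ltW.
Qed.

Let FbarE : Fb = (m \o @enorm R N) * F t + (cst 1 - (m \o @enorm R N)) * (fun y => P y).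
Proof. by []. Qed.

Lemma Fbar_outside x : delta <= enorm x -> Fb x = P x.
Proof. by move=> xd; rewrite /Fbar m_outside // mul0r add0r subr0 mul1r. Qed.

Lemma Fbar_bounds x : 0 <= Fb x <= P x.
Proof.
have [xd|xd] := leP (enorm x) delta; last first.
  by rewrite Fbar_outside ?(ltW xd) //= lexx andbT mulr_ge0 ?powR_ge0 // ltW.
have /andP[m0 m1] := m_range (enorm x).
have /andP[_ FP] := F_bounds xd.
have F0 := F_ge0 xd.
have P0 : 0 <= P x by rewrite mulr_ge0 ?powR_ge0 // ltW.
rewrite /Fbar; apply/andP; split; nra.
Qed.

Lemma Fbar_gt0 x : x != 0 -> 0 < Fb x.
Proof.
move=> x0; have Px := P_gt0 x0.
have [xd|xd] := leP (enorm x) delta; last by rewrite Fbar_outside // (ltW xd).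
have /andP[m0 m1] := m_range (enorm x).
have /andP[lo _] := F_bounds xd.
have F0 : 0 < F t x by apply: lt_le_trans lo; rewrite mulr_gt0 // powR_gt0 // enorm_gt0.
have mP0 : 0 <= (1 - m (enorm x)) * P x by rewrite mulr_ge0 ?subr_ge0 // ltW.
rewrite /Fbar; have [m_gt0|m_le0] := ltP 0 (m (enorm x)).
  by have := mulr_gt0 m_gt0 F0; lra.
have -> : m (enorm x) = 0 by apply/eqP; rewrite eq_le m_le0 m0.
by rewrite mul0r add0r subr0 mul1r.
Qed.

Lemma Fbar_near_outside x : delta < enorm x -> {near x, Fb =1 fun y => P y}.
Proof.
move=> xd; near=> y; apply: Fbar_outside; apply: ltW; near: y.
exact: (@cvgr_gt R _ (nbhs x) (nbhs_filter x) _ (enorm x) (@enorm_continuous R N x) delta xd).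
Unshelve. all: by end_near.
Qed.

Lemma Fbar_differentiable x : x != 0 -> differentiable Fb x.
Proof.
move=> x0; have [xd|xd] := leP (enorm x) delta.
  rewrite FbarE.
  have dm := differentiable_radial x0 (@m_derivable _).
  apply: differentiableD; apply: differentiableM => //; first exact: F_differentiable.
    exact: differentiableB.
  exact: differentiable_radial_powR.
apply: (near_eq_differentiable _ (differentiable_radial_powR M2 q2 x0)).
by move: (Fbar_near_outside xd); apply: filterS => y ->.
Qed.

Lemma derive_Fbar_inside x : x != 0 -> enorm x <= delta ->
  'D_x Fb x = enorm x * derive1 m (enorm x) * (F t x - P x) +
    m (enorm x) * 'D_x (F t) x + (1 - m (enorm x)) * (q2 * P x).
Proof.
move=> x0 xd.
rewrite FbarE.
have dm : derivable (m \o @enorm R N) x x.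
  exact/diff_derivable/differentiable_radial/m_derivable.
have dF : derivable (F t) x x by exact/diff_derivable/F_differentiable.
have dP : derivable (fun y => P y) x x.
  exact/diff_derivable/differentiable_radial_powR.
have d1 := derivable_cst (1 : R) x x.
have d1m := derivableB d1 dm.
rewrite (deriveD (derivableM dm dF) (derivableM d1m dP)).
rewrite (deriveM dm dF) (deriveM d1m dP) (deriveB d1 dm) derive_cst.
rewrite (derive_radial x0 (@m_derivable (enorm x))) (derive_radial_powR M2 q2 x0).
by rewrite !fctE /= -![_ *: _]/(_ * _); ring.
Qed.

Lemma Fbar_euler x : x != 0 -> theta * Fb x <= 'D_x Fb x.
Proof.
move=> x0; have [xd|xd] := leP (enorm x) delta; last first.
  rewrite (near_eq_derive _ (Fbar_near_outside xd)) derive_radial_powR //.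
  by rewrite Fbar_outside ?(ltW xd) // ler_wpM2r // mulr_ge0 ?powR_ge0 // ltW.
have F_range : 0 <= F t x <= P x.
  by rewrite F_ge0 //=; case/andP: (F_bounds xd) => _ ->.
have FD : beta * F t x <= 'D_x (F t) x.
  by rewrite -dotv_grad; [exact: F_euler | exact: F_differentiable].
rewrite derive_Fbar_inside //.
exact: cutoff_euler_ineq (m_range _) (m_nonincreasing _) F_range FD theta_le_beta theta_le_q2.
Qed.

End CutoffNonlinearity.

Theorem lemma3p1 (R : realType) (T : R) (N : nat) (p : R)
  (F : R -> 'rV[R]_N -> R) (delta : R)
  (q1 q2 M1 M2 beta : R) (m : R -> R) :
  0 < T -> (1 <= N)%N -> 1 < p -> 0 < delta ->
  (* C^1 regularity of F(t,.) on the closed ball of radius delta, for a.e. t *)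
  {ae (@lebesgue_measure R), forall t, t \in `[0, T] ->
     (forall x : 'rV[R]_N, enorm x <= delta -> differentiable (F t) x) /\
     (forall i : 'I_N, {within [set x : 'rV[R]_N | enorm x <= delta],
         continuous (fun x => grad (F t) x ord0 i)})} ->
  (* (H1) *)
  p ^+ 2 < q2 -> q2 < q1 -> 0 < M1 -> 0 < M2 ->
  {ae (@lebesgue_measure R), forall t, t \in `[0, T] ->
     forall x : 'rV[R]_N, enorm x <= delta ->
       M1 * (enorm x `^ q1) <= F t x <= M2 * (enorm x `^ q2)} ->
  (* (H2) *)
  p ^+ 2 < beta ->
  {ae (@lebesgue_measure R), forall t, t \in `[0, T] ->
     forall x : 'rV[R]_N, enorm x <= delta ->
       0 <= beta * F t x <= dotv (grad (F t) x) x} ->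
  (* the cut-off function m *)
  (forall s, derivable m s 1) -> continuous (derive1 m) ->
  (forall s, 0 <= m s <= 1) ->
  (forall s, m (- s) = m s) ->
  (forall s, s * derive1 m s <= 0) ->
  (forall s, `|s| <= delta / 2 -> m s = 1) ->
  (forall s, delta <= `|s| -> m s = 0) ->
  let theta := Num.min q2 beta in
  {ae (@lebesgue_measure R), forall t, t \in `[0, T] ->
     (forall x : 'rV[R]_N,
        0 <= Fbar m M2 q2 F t x <= M2 * (enorm x `^ q2)) /\
     (forall x : 'rV[R]_N, x != 0 ->
        differentiable (Fbar m M2 q2 F t) x /\
        0 < theta * Fbar m M2 q2 F t x <= dotv (grad (Fbar m M2 q2 F t) x) x)}.
Proof.
move=> _ _ _ _ F_reg q2_gt _ M1_gt0 M2_gt0 F_bounds beta_gt F_euler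
  m_der _ m_range _ m_nonincr _ m_zero theta.
have q2_gt0 : 0 < q2 := le_lt_trans (sqr_ge0 p) q2_gt.
have beta_gt0 : 0 < beta := le_lt_trans (sqr_ge0 p) beta_gt.
have theta_gt0 : 0 < theta by rewrite lt_min q2_gt0 beta_gt0.
have theta_le_q2 : theta <= q2 by rewrite ge_min lexx.
have theta_le_beta : theta <= beta by rewrite ge_min lexx orbT.
have m_outside s : delta <= s -> m s = 0.
  by move=> ds; apply: m_zero; rewrite (le_trans ds) ?ler_norm.
have ae_filter : Filter (almost_everywhere (@lebesgue_measure R)).
  exact: ae_filter_ringOfSetsType.
apply: filterS3 F_reg F_bounds F_euler => t reg bounds euler tT.
have [F_diff _] := reg tT.
have {}bounds := bounds tT.
have {}euler x : enorm x <= delta -> beta * F t x <= dotv (grad (F t) x) x.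
  by move=> xd; case/andP: (euler tT x xd).
split=> [x | x x0]; first exact: Fbar_bounds M1_gt0 M2_gt0 bounds m_range m_outside x.
have dFb := Fbar_differentiable M2 q2 F_diff m_der m_outside x0.
split=> //; rewrite dotv_grad // mulr_gt0 ?(Fbar_gt0 M1_gt0 M2_gt0 bounds m_range m_outside x0) //=.
exact (Fbar_euler M1_gt0 M2_gt0 F_diff bounds euler m_der m_range m_nonincr m_outside
  theta_le_q2 theta_le_beta x0).
Qed.
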